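(* Let $H$ be a connected graph that is isomorphic neither to $K_4$ nor to the diamond. Then any two distinct strong triangles of $H$ are edge-disjoint.
   Context: A triangle $T$ of $H$ is strong if every maximal matching of $H$ contains an edge of $T$. The diamond is the graph with vertices $a,b,c,d$ and edges $ab,ac,bc,bd,cd$. *)

From mathcomp Require Import all_boot.
Set Implicit Arguments. Unset Strict Implicit. Unset Printing Implicit Defensive.

Definition simple_graph (V : finType) (e : rel V) : Prop :=
  symmetric e /\ irreflexive e.

Definition is_edge (V : finType) (e : rel V) (f : {set V}) : bool :=
  [exists x, exists y, e x y && (f == [set x; y])].

Definition matching (V : finType) (e : rel V) (M : {set {set V}}) : bool :=
  [forall f in M, is_edge e f] &&
  [forall f in M, forall g in M, (f != g) ==> [disjoint f & g]].

Definition maximal_matching (V : finType) (e : rel V) (M : {set {set V}}) : bool :=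
  matching e M && [forall N : {set {set V}}, (matching e N && (M \subset N)) ==> (N == M)].

Definition triangle (V : finType) (e : rel V) (T : {set V}) : bool :=
  [exists x, exists y, exists z,
     [&& e x y, e y z, e x z & T == [set x; y; z]]].

(* The edges of a triangle T are the edges f with f \subset T. *)
Definition strong_triangle (V : finType) (e : rel V) (T : {set V}) : Prop :=
  triangle e T /\
  forall M : {set {set V}}, maximal_matching e M ->
    exists2 f, f \in M & f \subset T.

(* Two triangles are edge-disjoint iff they share no edge, i.e. at most one vertex. *)
Definition edge_disjoint (V : finType) (e : rel V) (T1 T2 : {set V}) : Prop :=
  forall f, is_edge e f -> ~ (f \subset T1 /\ f \subset T2).

Definition connected_graph (V : finType) (e : rel V) : Prop :=
  forall x y : V, connect e x y.

Definition graph_iso (V W : finType) (e : rel V) (e' : rel W) : Prop :=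
  exists f : V -> W, bijective f /\ forall x y, e' (f x) (f y) = e x y.

Definition K4_rel : rel 'I_4 := fun x y => x != y.

(* diamond on a=0,b=1,c=2,d=3 with edges ab,ac,bc,bd,cd (only ad missing) *)
Definition diamond_rel : rel 'I_4 := fun x y =>
  (x != y) && ~~ (((val x == 0) && (val y == 3)) || ((val x == 3) && (val y == 0))).

From mathcomp Require Import all_boot.
Set Implicit Arguments. Unset Strict Implicit. Unset Printing Implicit Defensive.

(* Suppose the strong triangles [p q a] and [p q d] share the edge pq. A strong
   triangle T cannot be avoided by a maximal matching, so no two disjoint edges
   can join two distinct vertices of T to vertices outside T: together they
   cover two of the three vertices of T, and a maximal matching extending them
   contains no edge of T. Hence no edge leaves {p, q, a, d}; by connectivity
   these are all the vertices, and the graph is K4 or the diamond according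
   to whether a and d are adjacent. *)

Lemma meet_subset_card (T : finType) (A B C : {set T}) :
  A \subset C -> B \subset C -> #|C| < #|A| + #|B| -> A :&: B != set0.
Proof.
move=> sAC sBC; rewrite -cardsUI -card_gt0; apply: contraTT; rewrite -leqNgt.
rewrite leqn0 => /eqP ->; rewrite addn0 -leqNgt.
by apply: subset_leq_card; rewrite subUset sAC.
Qed.

Lemma graph_iso_bij (V W : finType) (e : rel V) (e' : rel W) (h : W -> V) :
  bijective h -> (forall i j, e (h i) (h j) = e' i j) -> graph_iso e e'.
Proof.
case=> g hK gK eh; exists g; split; first by exists h.
by move=> x y; rewrite -eh !gK.
Qed.

Lemma connect_exit (V : finType) (e : rel V) (S : {set V}) x y :
  connect e x y -> x \notin S -> y \in S -> exists u v, [/\ u \notin S, v \in S & e u v].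
Proof.
case/connectP => s; elim: s x => [|z s IHs] x /= => [_ -> | /andP[exz pzs] lst] xS yS.
  by rewrite yS in xS.
have [zS | zS] := boolP (z \in S); first by exists x, z.
exact: IHs pzs lst zS yS.
Qed.

Section Matchings.
Variables (V : finType) (e : rel V).

Lemma maximal_matching_ext M0 :
  matching e M0 -> exists2 M, maximal_matching e M & M0 \subset M.
Proof.
move=> mM0; pose P N := matching e N && (M0 \subset N).
have PM0 : P M0 by rewrite /P mM0 subxx.
have [M /andP[mM sM0M] Mmax] := arg_maxnP (fun N : {set {set V}} => #|N|) PM0.
exists M => //; rewrite /maximal_matching mM /=.
apply/forallP => N; apply/implyP => /andP[mN sMN].
by rewrite eq_sym eqEcard sMN; apply: Mmax; rewrite /P mN (subset_trans sM0M sMN).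
Qed.

Lemma matching_eq M f g x :
  matching e M -> f \in M -> g \in M -> x \in f -> x \in g -> f = g.
Proof.
case/andP=> _ /forallP/(_ f) dM fM gM xf xg; have [//|fg] := eqVneq f g.
move: dM; rewrite fM => /forallP/(_ g); rewrite gM fg /= => /disjointFr/(_ xf).
by rewrite xg.
Qed.

Lemma is_edge_pair u v : e u v -> is_edge e [set u; v].
Proof. by move=> euv; apply/existsP; exists u; apply/existsP; exists v; rewrite euv eqxx. Qed.

Lemma matching_pair u1 v1 u2 v2 : e u1 v1 -> e u2 v2 ->
  [disjoint [set u1; v1] & [set u2; v2]] ->
  matching e [set [set u1; v1]; [set u2; v2]].
Proof.
move=> e1 e2 dis; apply/andP; split.
  by apply/forallP => f; apply/implyP; rewrite !inE => /orP[]/eqP->; apply: is_edge_pair.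
apply/forallP => f; apply/implyP; rewrite !inE => /orP[]/eqP->;
apply/forallP => g; apply/implyP; rewrite !inE => /orP[]/eqP->;
by rewrite ?eqxx ?dis ?implybT // disjoint_sym dis implybT.
Qed.

End Matchings.

Section SimpleGraph.
Variables (V : finType) (e : rel V).
Hypothesis sg : simple_graph e.

Lemma edge_sym x y : e x y = e y x.
Proof. by case: sg => sym_e _; apply: sym_e. Qed.

Lemma edge_irr x : e x x = false.
Proof. by case: sg => _; apply. Qed.

Lemma edge_neq x y : e x y -> x != y.
Proof. by apply: contraTneq => ->; rewrite edge_irr. Qed.

Lemma card_edge f : is_edge e f -> #|f| = 2.
Proof. by case/existsP=> x /existsP[y /andP[exy /eqP->]]; rewrite cards2 edge_neq. Qed.

Lemma card_set3 (x y z : V) : x != y -> x != z -> y != z -> #|[set x; y; z]| = 3.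
Proof.
move=> xy xz yz.
by rewrite setUC cardsU1 cards2 xy !inE negb_or eq_sym xz eq_sym yz.
Qed.

Lemma triangle_set3 T : triangle e T ->
  exists x y z, [/\ e x y, e x z, e y z & T = [set x; y; z]].
Proof.
by case/existsP=> x /existsP[y /existsP[z /and4P[xy yz xz /eqP->]]]; exists x, y, z.
Qed.

Lemma card_triangle T : triangle e T -> #|T| = 3.
Proof.
case/triangle_set3 => x [y [z [xy xz yz ->]]].
by rewrite card_set3 ?edge_neq.
Qed.

Lemma triangle_edge T u v : triangle e T -> u \in T -> v \in T -> u != v -> e u v.
Proof.
case/triangle_set3 => x [y [z [xy xz yz ->]]].
by rewrite !inE => /orP[/orP[]|]/eqP-> /orP[/orP[]|]/eqP->;
  rewrite ?eqxx // ?(edge_sym y x) ?(edge_sym z x) ?(edge_sym z y).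
Qed.

Lemma triangle_apex T p q : triangle e T -> [set p; q] \subset T -> p != q ->
  exists a, T = [set p; q; a].
Proof.
move=> tT sT pq; have : #|T :\: [set p; q]| = 1.
  by rewrite cardsD (setIidPr sT) card_triangle // cards2 pq.
move/eqP/cards1P => [a Ta]; exists a.
by rewrite -(setID T [set p; q]) (setIidPr sT) Ta.
Qed.

Lemma triangle3_edges x y z : triangle e [set x; y; z] -> [/\ e x y, e x z & e y z].
Proof.
move=> tT; have no_pair (u v : V) : ~ [set x; y; z] \subset [set u; v].
  by move/subset_leq_card; rewrite card_triangle // cards2; case: (u != v).
have xy : x != y.
  apply/eqP => xy; apply: (no_pair y z); apply/subsetP => u.
  by rewrite !inE xy => /orP[/orP[]|] ->; rewrite ?orbT.
have xz : x != z.
  apply/eqP => xz; apply: (no_pair y z); apply/subsetP => u.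
  by rewrite !inE xz => /orP[/orP[]|] ->; rewrite ?orbT.
have yz : y != z.
  apply/eqP => yz; apply: (no_pair x z); apply/subsetP => u.
  by rewrite !inE yz => /orP[/orP[]|] ->; rewrite ?orbT.
by split; apply: (triangle_edge tT); rewrite // !inE eqxx ?orbT.
Qed.

Lemma strong_triangle_pendants T u1 v1 u2 v2 : strong_triangle e T ->
  e u1 v1 -> e u2 v2 -> u1 \notin T -> u2 \notin T -> v1 \in T -> v2 \in T ->
  u1 != u2 -> v1 != v2 -> False.
Proof.
move=> [tT sT] e1 e2 u1T u2T v1T v2T u12 v12.
have dis : [disjoint [set u1; v1] & [set u2; v2]].
  rewrite disjoints_subset; apply/subsetP => x; rewrite !inE => /orP[]/eqP->.
    by rewrite negb_or u12; apply: contraNneq u1T => ->.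
  by rewrite negb_or v12 andbT; apply: contraTneq v1T => ->.
have [M mM sM] := maximal_matching_ext (matching_pair e1 e2 dis).
have [f fM fT] := sT M mM; case/andP: mM => mM _.
have f2 : #|f| = 2 by case/andP: mM => /forallP/(_ f)/implyP/(_ fM)/card_edge.
have sv : [set v1; v2] \subset T by rewrite subUset !sub1set v1T v2T.
have /set0Pn[v] : f :&: [set v1; v2] != set0.
  by apply: meet_subset_card fT sv _; rewrite card_triangle // f2 cards2 v12.
have out u w : [set u; w] \in M -> u \notin T -> w \in f -> False.
  move=> uwM uT wf; have fuw : f = [set u; w] := matching_eq mM fM uwM wf (set22 u w).
  by move: uT; rewrite (subsetP fT) // fuw set21.
rewrite !inE => /andP[vf /orP[]/eqP vv]; subst v.
  exact: (out u1 v1 (subsetP sM _ (set21 _ _))).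
exact: (out u2 v2 (subsetP sM _ (set22 _ _))).
Qed.

Lemma strong_triangles_cover p q a d : connected_graph e ->
  strong_triangle e [set p; q; a] -> strong_triangle e [set p; q; d] -> a != d ->
  forall x, x \in [set a; p; q; d].
Proof.
move=> conn s1 s2 ad x; apply/contraT => xS; exfalso.
have [epq epa eqa] := triangle3_edges s1.1; have [_ epd eqd] := triangle3_edges s2.1.
have pS : p \in [set a; p; q; d] by rewrite !inE eqxx orbT.
have [u [v [uS vS euv]]] := connect_exit (conn x p) xS pS.
have uT1 : u \notin [set p; q; a].
  by apply: contra uS; rewrite !inE => /orP[/orP[]|] ->; rewrite ?orbT.
have uT2 : u \notin [set p; q; d].
  by apply: contra uS; rewrite !inE => /orP[/orP[]|] ->; rewrite ?orbT.
have [edp edq eap eaq] : [/\ e d p, e d q, e a p & e a q] by split; rewrite edge_sym.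
have dT1 : d \notin [set p; q; a].
  by rewrite !inE !negb_or (edge_neq edp) (edge_neq edq) eq_sym ad.
have aT2 : a \notin [set p; q; d] by rewrite !inE !negb_or (edge_neq eap) (edge_neq eaq) ad.
have ud : u != d by apply: contraNneq uS => ->; rewrite !inE eqxx orbT.
have ua : u != a by apply: contraNneq uS => ->; rewrite !inE eqxx.
have pT1 := set1Ul a (set21 p q); have qT1 := set1Ul a (set22 p q).
have pT2 := set1Ul d (set21 p q); have aT1 := set1Ur [set p; q] a.
have dT2 := set1Ur [set p; q] d.
move: vS euv; rewrite !inE => /orP[/orP[/orP[]|]|]/eqP-> euv.
- exact: (strong_triangle_pendants s1 euv edp uT1 dT1 aT1 pT1 ud (edge_neq eap)).
- exact: (strong_triangle_pendants s1 euv edq uT1 dT1 pT1 qT1 ud (edge_neq epq)).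
- by apply: (strong_triangle_pendants s1 euv edp uT1 dT1 qT1 pT1 ud); rewrite eq_sym edge_neq.
- exact: (strong_triangle_pendants s2 euv eap uT2 aT2 dT2 pT2 ua (edge_neq edp)).
Qed.

Lemma iso_K4_diamond p q a d :
  triangle e [set p; q; a] -> triangle e [set p; q; d] -> a != d ->
  (forall x, x \in [set a; p; q; d]) ->
  graph_iso e (if e a d then K4_rel else diamond_rel).
Proof.
move=> t1 t2 ad cover.
have [epq epa eqa] := triangle3_edges t1; have [_ epd eqd] := triangle3_edges t2.
pose h (i : 'I_4) := nth a [:: a; p; q; d] i.
apply: (@graph_iso_bij _ _ _ _ h).
  apply: inj_card_bij.
    move=> i j /eqP; rewrite nth_uniq //= => [/eqP/val_inj //|].
    rewrite !inE !negb_or ad (eq_sym a p) (eq_sym a q).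
    by rewrite !edge_neq.
  rewrite card_ord; apply: leq_trans (card_size [:: a; p; q; d]).
  by apply/subset_leq_card/subsetP => x _; move: (cover x); rewrite !inE -!orbA.
move=> i j; rewrite /h.
case: i => [[|[|[|[|i]]]] Hi]; case: j => [[|[|[|[|j]]]] Hj] //=.
all: rewrite ?edge_irr ?(edge_sym a) ?(edge_sym q p) ?(edge_sym d) ?epq ?epa ?eqa ?epd ?eqd.
all: by case: (e a d).
Qed.

End SimpleGraph.

Theorem mainTheorem16 (V : finType) (e : rel V) :
  simple_graph e ->
  connected_graph e ->
  ~ graph_iso e K4_rel ->
  ~ graph_iso e diamond_rel ->
  forall T1 T2 : {set V},
    strong_triangle e T1 -> strong_triangle e T2 -> T1 != T2 ->
    edge_disjoint e T1 T2.
Proof.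
move=> sg conn notK4 notD T1 T2 s1 s2 T12 f.
case/existsP=> p /existsP[q /andP[epq /eqP->]] [pqT1 pqT2].
have [a T1a] := triangle_apex sg s1.1 pqT1 (edge_neq sg epq).
have [d T2d] := triangle_apex sg s2.1 pqT2 (edge_neq sg epq).
subst T1 T2; have ad : a != d by apply: contraNneq T12 => ->.
have := iso_K4_diamond sg s1.1 s2.1 ad (strong_triangles_cover sg conn s1 s2 ad).
by case: (e a d).
Qed.
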